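(* Let $G$ be a wireline network, $\mathcal{A}$ an adversary and $\mathcal{S}$ a scheduling policy, and let $\mathcal{D}$ be an arbitrary execution of the wireline system $(G,\mathcal{A},\mathcal{S})$. Let $G^{\equiv}$ be the equivalent network of $G$ and $\mathcal{D}^{\equiv}$ the equivalent execution of the radio routing protocol using scheduling policy $\mathcal{S}$ and the work-conserving transmission oracle against the adversary $\mathcal{A}^{\equiv}$ in $G^{\equiv}$ (all as defined in the context). Then for every packet $p$ of $\mathcal{D}$, every link $e$ of $G$ and every round $t$: $p$ is in the queue of link $e$ at round $t$ in $\mathcal{D}$ if and only if $p^{\equiv}$ is in the queue of node $v^{e}$ at round $t$ in $\mathcal{D}^{\equiv}$.
   Context: Classical wireline adversarial queuing model: a network is a directed graph $G$; time proceeds in synchronous rounds; each directed link $e$ has its own queue of packets waiting to cross $e$; in each round each link transmits at most one packet from its queue, the packet being chosen by the scheduling policy $\mathcal{S}$ (a rule that selects one packet from a set of packets waiting at a queue, based on attributes such as injection time and path); packets are injected by an adversary, each with its complete path (a sequence of links) fixed at injection. Multi-hop radio network model: a network is a graph whose nodes are transceivers; each node keeps a single queue of packets waiting to be forwarded; each packet is injected with its complete path; in each round a node transmits at most one packet, selected from its queue by the scheduling policy; when a node transmits a packet and the next node on the packet's path hears it, the packet leaves the sender's queue and is appended to the recipient's queue (or absorbed if it has reached its destination). A transmission oracle tells each node in each round whether to transmit. The work-conserving oracle lets every node transmit in every round (one packet per round) whenever its queue is nonempty; here the scenario is assumed free of interferences, so every transmitted packet is heard by its intended recipient (in this case proactive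 and reactive hearing control behave identically). Equivalent network: given wireline network $G$, $G^{\equiv}$ has one node $v^{e}$ for each link $e$ of $G$, and for each pair of links $e=(\cdot,u)$ and $f=(u,\cdot)$ of $G$ the node $v^{e}$ is connected to $v^{f}$. The queue of link $e$ in $G$ and the queue of node $v^{e}$ in $G^{\equiv}$ are called equivalent. Equivalent execution: for each packet $p$ injected by $\mathcal{A}$ at some round, $\mathcal{A}^{\equiv}$ injects a packet $p^{\equiv}$ at the same round following the path obtained by replacing each queue (link) on the path of $p$ by its equivalent queue (node); $p^{\equiv}$ may be absorbed at any node pointed to by its last traversed queue. The same scheduling policy $\mathcal{S}$ is used in both systems. *)

From mathcomp Require Import all_boot.
Set Implicit Arguments. Unset Strict Implicit. Unset Printing Implicit Defensive.

(** * Packets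
    A packet in flight is ((pid, injection round), path, hop), where the path
    is the full sequence of queues it must traverse (fixed at injection) and
    [hop] is the index in the path of the queue it currently waits in. *)
Definition packet (Q : Type) := (((nat * nat) * seq Q) * nat)%type.
Definition pid {Q} (p : packet Q) : nat := p.1.1.1.
Definition itime {Q} (p : packet Q) : nat := p.1.1.2.
Definition route {Q} (p : packet Q) : seq Q := p.1.2.
Definition hop {Q} (p : packet Q) : nat := p.2.

(** next queue on the path after the current one (None = absorbed next) *)
Definition next_queue {Q} (p : packet Q) : option Q := ohead (drop (hop p).+1 (route p)).
Definition advance {Q} (p : packet Q) : packet Q := (p.1, (hop p).+1).

(** An adversary injects, at each round, a list of (packet id, path). *)
Definition adversary (Q : Type) := nat -> seq (nat * seq Q).

Definition policy (Q : Type) := nat -> seq (packet Q) -> option (packet Q).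
Definition policy_ok {Q : eqType} (S : policy Q) : Prop :=
  forall t q, (q != [::] -> S t q != None) /\ (forall p, S t q = Some p -> p \in q).

Definition valid_route {Q} (r : rel Q) (s : seq Q) : bool :=
  if s is x :: s' then path r x s' else false.

Definition configuration (Q : Type) := Q -> seq (packet Q).

Definition inject {Q : eqType} (A : adversary Q) (t : nat) (c : configuration Q)
  : configuration Q :=
  fun q => c q ++ [seq (x.1, t, x.2, 0) | x <- A t & ohead x.2 == Some q].

Section Wireline.
Variables (V E : finType) (src dst : E -> V) (S : policy E) (A : adversary E).

Definition wire_step (t : nat) (c : configuration E) : configuration E :=
  fun f =>
    (if S t (c f) is Some p then rem p (c f) else c f) ++
    [seq advance p | p <- pmap (fun e => S t (c e)) (enum E) & next_queue p == Some f].

(** Queues during round t (after the injections of round t). *)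
Fixpoint wire_conf (t : nat) : configuration E :=
  match t with
  | 0 => inject A 0 (fun _ => [::])
  | t'.+1 => inject A t'.+1 (wire_step t' (wire_conf t'))
  end.
End Wireline.

Definition link_rel {V E : finType} (src dst : E -> V) : rel E :=
  fun e f => dst e == src f.

Definition oracle (N : Type) := nat -> N -> seq (packet N) -> bool.
(** hearing: at round t, with transmitter set T, does the intended recipient
    ([Some w], or [None] = the absorbing destination) hear node u? *)
Definition hearing (N : finType) := nat -> {set N} -> N -> option N -> bool.

Definition work_conserving {N : eqType} : oracle N := fun _ _ q => q != [::].

Definition interference_free {N : finType} (adj : rel N) (H : hearing N) : Prop :=
  forall t (T : {set N}) (u : N), u \in T ->
    H t T u None /\ (forall w, adj u w -> H t T u (Some w)).

Section Radio.
Variables (N : finType) (S : policy N) (O : oracle N) (H : hearing N) (A : adversary N).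

Definition radio_step (t : nat) (c : configuration N) : configuration N :=
  let ch u := if O t u (c u) then S t (c u) else None in
  let T := [set u | ch u != None] in
  let sent u := if ch u is Some p then
                  (if H t T u (next_queue p) then Some p else None) else None in
  fun w =>
    (if sent w is Some p then rem p (c w) else c w) ++
    [seq advance p | p <- pmap sent (enum N) & next_queue p == Some w].

Fixpoint radio_conf (t : nat) : configuration N :=
  match t with
  | 0 => inject A 0 (fun _ => [::])
  | t'.+1 => inject A t'.+1 (radio_step t' (radio_conf t'))
  end.
End Radio.

(** * Equivalent network G^≡: node v^e for each link e (we represent v^e by e
    itself), v^e connected to v^f iff e = (.,u) and f = (u,.). *)
Definition vnode {E : Type} (e : E) : E := e.
Definition equiv_adj {V E : finType} (src dst : E -> V) : rel E :=
  fun e f => dst e == src f.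
Definition equiv_adversary {E : Type} (A : adversary E) : adversary E :=
  fun t => [seq (x.1, map vnode x.2) | x <- A t].

From mathcomp Require Import all_boot.
From Stdlib Require Import FunctionalExtensionality.

(* Every queued packet waits in the queue named by the current hop of its
   route, and routes follow consecutive links; this invariant is preserved by
   injections and wireline rounds.  Under it the next hop of a transmitted
   packet is a neighbour of the sender in G^≡, so with the work-conserving
   oracle and no interference every node of G^≡ sends exactly the packet its
   link would send in G.  The two systems therefore perform the same round
   function from the same initial configuration, and coincide at every round. *)

Lemma map_vnode (E : Type) (s : seq E) : map vnode s = s.
Proof. exact: map_id. Qed.

Lemma equiv_adversary_id (E : Type) (A : adversary E) : equiv_adversary A = A.
Proof.
apply: functional_extensionality => t; rewrite /equiv_adversary.
by elim: (A t) => //= [[i r] l ->]; rewrite map_vnode.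
Qed.

Lemma next_queueP {Q : Type} {p : packet Q} {w : Q} : next_queue p = Some w ->
  (hop p).+1 < size (route p) /\ nth w (route p) (hop p).+1 = w.
Proof.
rewrite /next_queue; case: (ltnP (hop p).+1 (size (route p))) => lt_hop.
  by rewrite (drop_nth w lt_hop) => -[->].
by rewrite drop_oversize.
Qed.

Lemma valid_route_nth {Q : Type} {r : rel Q} {s : seq Q} (x0 : Q) {i : nat} :
  valid_route r s -> i.+1 < size s -> r (nth x0 s i) (nth x0 s i.+1).
Proof. by case: s => [|x s] //= /(pathP x0) r_s /r_s. Qed.

Definition radio_sent {N : finType} (S : policy N) (O : oracle N) (H : hearing N)
    (t : nat) (c : configuration N) (u : N) : option (packet N) :=
  let ch u := if O t u (c u) then S t (c u) else None in
  let T := [set u | ch u != None] in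
  if ch u is Some p then (if H t T u (next_queue p) then Some p else None) else None.

Lemma radio_stepE (N : finType) (S : policy N) (O : oracle N) (H : hearing N)
    (t : nat) (c : configuration N) :
  radio_step S O H t c =
  fun w => (if radio_sent S O H t c w is Some p then rem p (c w) else c w) ++
    [seq advance p | p <- pmap (radio_sent S O H t c) (enum N) & next_queue p == Some w].
Proof. by []. Qed.

Lemma work_conserving_choice (N : eqType) (S : policy N) (t : nat) (u : N)
    (q : seq (packet N)) :
  policy_ok S -> (if work_conserving t u q then S t q else None) = S t q.
Proof.
move=> S_ok; rewrite /work_conserving; case: eqP => [->|] //.
by case S0: (S t [::]) => [p|] //; have [_ /(_ p S0)] := S_ok t [::].
Qed.

Section Equivalence.
Variables (V E : finType) (src dst : E -> V) (S : policy E).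
Hypothesis S_ok : policy_ok S.

Definition routed (c : configuration E) : Prop :=
  forall q p, p \in c q ->
    [/\ hop p < size (route p), nth q (route p) (hop p) = q &
        valid_route (link_rel src dst) (route p)].

Lemma routed_inject {A : adversary E} {t : nat} {c : configuration E} :
  (forall x, x \in A t -> valid_route (link_rel src dst) x.2) ->
  routed c -> routed (inject A t c).
Proof.
move=> A_valid c_routed q p; rewrite mem_cat => /orP[/c_routed//|].
case/mapP=> x; rewrite mem_filter => /andP[head_q /A_valid valid_x] ->.
by case: x head_q valid_x => i [|y s] //= /eqP[->].
Qed.

Lemma routed_wire_step {t : nat} {c : configuration E} :
  routed c -> routed (wire_step S t c).
Proof.
move=> c_routed q p; rewrite mem_cat => /orP[|].
  by case: (S t (c q)) => [x /mem_rem|]; apply: c_routed.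
case/mapP=> x; rewrite mem_filter => /andP[/eqP/next_queueP[lt_hop nth_q]].
rewrite mem_pmap => /mapP[u _ Su] ->.
have [_ /(_ x (esym Su)) x_in] := S_ok t (c u).
by have [_ _ valid_x] := c_routed _ _ x_in.
Qed.

Lemma routed_next_link (c : configuration E) (u w : E) (p : packet E) :
  routed c -> p \in c u -> next_queue p = Some w -> link_rel src dst u w.
Proof.
move=> c_routed /c_routed[_ nth_u valid_p] /next_queueP[lt_hop nth_w].
have := valid_route_nth u valid_p lt_hop.
by rewrite nth_u (set_nth_default w) // nth_w.
Qed.

Lemma radio_sent_wire {H : hearing E} {c : configuration E} (t : nat) (u : E) :
  interference_free (equiv_adj src dst) H -> routed c ->
  radio_sent S work_conserving H t c u = S t (c u).
Proof.
move=> H_free c_routed; rewrite /radio_sent work_conserving_choice //.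
set T := [set _ | _]; case Su: (S t (c u)) => [p|] //.
have u_T : u \in T by rewrite inE work_conserving_choice // Su.
have [hear_dst hear_adj] := H_free t T u u_T.
case nq: (next_queue p) => [w|]; last by rewrite hear_dst.
have [_ /(_ p Su) p_in] := S_ok t (c u).
by rewrite hear_adj //; apply: routed_next_link c_routed p_in nq.
Qed.

Lemma radio_step_wire (H : hearing E) (t : nat) (c : configuration E) :
  interference_free (equiv_adj src dst) H -> routed c ->
  radio_step S work_conserving H t c = wire_step S t c.
Proof.
move=> H_free c_routed; rewrite radio_stepE.
apply: functional_extensionality => w.
by rewrite radio_sent_wire // (eq_pmap (fun u => radio_sent_wire t u H_free c_routed)).
Qed.

Lemma radio_conf_wire (A : adversary E) (H : hearing E) :
  (forall t x, x \in A t -> valid_route (link_rel src dst) x.2) ->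
  interference_free (equiv_adj src dst) H ->
  forall t, radio_conf S work_conserving H A t = wire_conf S A t
            /\ routed (wire_conf S A t).
Proof.
move=> A_valid H_free; elim=> [|t [IH t_routed]] /=.
  by split=> //; apply: routed_inject (A_valid 0) _ => q p.
rewrite IH radio_step_wire //; split=> //.
exact: routed_inject (A_valid t.+1) (routed_wire_step t_routed).
Qed.

End Equivalence.

Theorem lemma1 (V E : finType) (src dst : E -> V) (S : policy E) (A : adversary E)
    (H : hearing E) :
  policy_ok S ->
  (forall t x, x \in A t -> valid_route (link_rel src dst) x.2) ->
  interference_free (equiv_adj src dst) H ->
  forall (i t0 : nat) (r : seq E) (e : E) (t : nat),
    (exists h, (i, t0, r, h) \in wire_conf S A t e) <->
    (exists h, (i, t0, map vnode r, h) \in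
       radio_conf S work_conserving H (equiv_adversary A) t (vnode e)).
Proof.
move=> S_ok A_valid H_free i t0 r e t.
have [conf_eq _] := @radio_conf_wire _ _ src dst _ S_ok _ _ A_valid H_free t.
by rewrite equiv_adversary_id conf_eq map_vnode.
Qed.
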